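(* Let $M,N\ge 0$ and let $u\le w$ be elements of the poset of shuffles $W_{MN}$. Then the interval $[u,w]=\{v\in W_{MN}: u\le v\le w\}$ is isomorphic (as a poset) to a product $W_{M_1N_1}\times W_{M_2N_2}\times\cdots\times W_{M_kN_k}$ of posets of shuffles, for suitable $k\ge 1$ and $M_p,N_p\ge 0$.
   Context: Let $\mathcal{A}=\{a_1,\dots,a_M\}$ (lower alphabet) and $\mathcal{X}=\{x_1,\dots,x_N\}$ (upper alphabet) be disjoint finite sets. A shuffle word is a word (possibly empty) with distinct letters from $\mathcal{A}\cup\mathcal{X}$ such that the letters from $\mathcal{A}$ occurring in it appear in increasing order of subscripts, and likewise for the letters from $\mathcal{X}$. The poset of shuffles $W_{MN}$ is the set of all shuffle words over $\mathcal{A},\mathcal{X}$, partially ordered as the reflexive-transitive closure of the covering relation: $w$ is covered by $w'$ iff $w'$ is obtained from $w$ either by deleting a letter belonging to $\mathcal{A}$ or by inserting a letter belonging to $\mathcal{X}$ (in a position such that the result is a shuffle word). Its minimum is $a_1a_2\cdots a_M$ and its maximum is $x_1x_2\cdots x_N$. *)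

From mathcomp Require Import all_boot.
From Stdlib Require Import Relations.
Set Implicit Arguments. Unset Strict Implicit. Unset Printing Implicit Defensive.

(* Letters: inl i is the lower letter a_{i+1} (i : 'I_M),
            inr j is the upper letter x_{j+1} (j : 'I_N). *)
Definition letter (M N : nat) : Type := ('I_M + 'I_N)%type.

Definition low_idx {M N} (l : letter M N) : option nat :=
  match l with inl i => Some (val i) | inr _ => None end.
Definition up_idx {M N} (l : letter M N) : option nat :=
  match l with inl _ => None | inr j => Some (val j) end.

Definition is_shuffle {M N} (w : seq (letter M N)) : bool :=
  [&& uniq w, sorted ltn (pmap low_idx w) & sorted ltn (pmap up_idx w)].

Definition W (M N : nat) := {w : seq (letter M N) | is_shuffle w}.

Definition shuffle_cover {M N} (w w' : seq (letter M N)) : Prop :=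
  (exists (s1 s2 : seq (letter M N)) (a : 'I_M),
      w = s1 ++ inl a :: s2 /\ w' = s1 ++ s2)
  \/ (exists (s1 s2 : seq (letter M N)) (x : 'I_N),
      w = s1 ++ s2 /\ w' = s1 ++ inr x :: s2 /\ is_shuffle w').

Definition shuffle_le {M N} (u v : W M N) : Prop :=
  clos_refl_trans (W M N) (fun a b => shuffle_cover (val a) (val b)) u v.

From Stdlib Require Import Relations Setoid ProofIrrelevance FunctionalExtensionality.
From mathcomp Require Import all_boot.
Set Implicit Arguments. Unset Strict Implicit. Unset Printing Implicit Defensive.

(* The order of W_MN is intrinsic ([shuffle_leP]): u <= v iff every lower letter of v
   occurs in u, every upper letter of u occurs in v, and the letters common to u and v
   occur in the same order in both ([word_le]).  Given u <= w, the letters common to u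
   and w cut u into k blocks L_1, ..., L_k of lower letters and w into k blocks
   X_1, ..., X_k of upper letters.  A word v lies in [u, w] iff it is the common letters
   separated by blocks V_1, ..., V_k, with V_p a shuffle of a subword of L_p and a subword
   of X_p; and two such words compare iff they compare block by block ([word_le_blocks]).
   Renaming the letters of L_p and X_p to a_1, a_2, ... and x_1, x_2, ... identifies the
   possible V_p with W_{|L_p| |X_p|}. *)

Lemma subseq_pmap (T U : eqType) (f : T -> option U) (s1 s2 : seq T) :
  subseq s1 s2 -> subseq (pmap f s1) (pmap f s2).
Proof.
case/subseqP=> m _ ->; elim: s2 m => [|x s2 IH] [|[] m] //=; first exact: sub0seq.
- by case: (f x) => [y|] /=; rewrite ?eqxx IH.
- case: (f x) => [y|] //=; exact: subseq_trans (IH m) (subseq_cons _ _).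
Qed.

Lemma subseq_map_inj (T U : eqType) (f : T -> U) (s1 s2 : seq T) : injective f ->
  subseq (map f s1) (map f s2) = subseq s1 s2.
Proof.
move=> f_inj; apply/idP/idP => [|/(map_subseq f)//].
by case/subseqP=> m sz; rewrite -map_mask => /(inj_map f_inj) ->; apply: mask_subseq.
Qed.

Lemma sorted_ltn_subseq_iota n (s : seq nat) :
  all (gtn n) s -> sorted ltn s = subseq s (iota 0 n).
Proof.
move=> sn; apply/idP/idP => [s_sorted|sub]; last first.
  exact (subseq_sorted ltn_trans sub (iota_ltn_sorted 0 n)).
have -> : s = filter (mem s) (iota 0 n).
  apply: (irr_sorted_eq ltn_trans ltnn) => //.
    exact (sorted_filter ltn_trans _ (iota_ltn_sorted 0 n)).
  by move=> i; rewrite mem_filter mem_iota andb_idr // => /(allP sn).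
exact: filter_subseq.
Qed.

Lemma sorted_ltn_tnth (T : eqType) (t : seq T) (js : seq 'I_(size t)) : uniq t ->
  sorted ltn (map val js) = subseq (map (tnth (in_tuple t)) js) t.
Proof.
move=> t_uniq; rewrite (@sorted_ltn_subseq_iota (size t)); last first.
  by apply/allP=> _ /mapP [j _ ->]; apply: ltn_ord.
rewrite -val_enum_ord subseq_map_inj; last exact: val_inj.
have e : map (tnth (in_tuple t)) (enum 'I_(size t)) = t by rewrite map_tnth_enum.
rewrite -[X in _ = subseq _ X]e subseq_map_inj //.
exact/tuple_uniqP.
Qed.

Lemma mem_nth_flatten (T : eqType) (ss : seq (seq T)) i x :
  x \in nth [::] ss i -> x \in flatten ss.
Proof.
move=> xi; apply/flattenP; exists (nth [::] ss i) => //.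
by apply: mem_nth; rewrite ltnNge; apply: contraL xi => /(nth_default _) ->.
Qed.

Lemma nth_map_filter (T : eqType) (ss : seq (seq T)) (a : pred T) i :
  nth [::] (map (filter a) ss) i = filter a (nth [::] ss i).
Proof. by elim: ss i => [|s ss' IH] [|i] //=. Qed.

Lemma uniq_flatten_nth (T : eqType) (ss : seq (seq T)) i :
  uniq (flatten ss) -> uniq (nth [::] ss i).
Proof.
elim: ss i => [|s ss' IH] [|i] //=; rewrite cat_uniq => /and3P [s_uniq _ ss'_uniq] //.
exact: IH.
Qed.

Lemma uniq_flatten_nth_eq (T : eqType) (ss : seq (seq T)) i j x : uniq (flatten ss) ->
  x \in nth [::] ss i -> x \in nth [::] ss j -> i = j.
Proof.
elim: ss i j => [|s ss' IH] [|i] [|j] //=; rewrite cat_uniq => /and3P [_ dis ss'_uniq].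
- by move=> xs /mem_nth_flatten xss'; case/hasP: dis; exists x.
- by move=> /mem_nth_flatten xss' xs; case/hasP: dis; exists x.
- by move=> xi xj; rewrite (IH i j ss'_uniq xi xj).
Qed.

Lemma uniq_flatten (T : eqType) (ss : seq (seq T)) : (forall i, uniq (nth [::] ss i)) ->
  (forall i j x, x \in nth [::] ss i -> x \in nth [::] ss j -> i = j) ->
  uniq (flatten ss).
Proof.
elim: ss => [|s ss' IH] //= ss_uniq ss_dis; rewrite cat_uniq (ss_uniq 0) IH; first last.
- by move=> i j x xi xj; case: (ss_dis i.+1 j.+1 x xi xj).
- by move=> i; apply: (ss_uniq i.+1).
rewrite andbT /=; apply/hasP=> -[x xss' xs]; case/flattenP: xss' => s' s'ss' xs'.
case/(nthP [::]): s'ss' => i _ si.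
by have := ss_dis 0 i.+1 x xs; rewrite /= si => /(_ xs').
Qed.


Lemma filter_swap (T : eqType) (a b : pred T) s :
  filter a (filter b s) = filter b (filter a s).
Proof. by rewrite -!filter_predI; apply: eq_filter => x /=; rewrite andbC. Qed.

Lemma rem_split (T : eqType) (x : T) s : x \in s ->
  exists s1 s2, s = s1 ++ x :: s2 /\ rem x s = s1 ++ s2.
Proof.
move=> xs; exists (take (index x s) s), (drop (index x s).+1 s); split; last exact: remE.
by rewrite -[LHS](cat_take_drop (index x s)) (drop_nth x) ?index_mem ?nth_index.
Qed.

Lemma pmap_filter_id (T U : eqType) (f : T -> option U) (a : pred T) s :
  {in s, forall x, ~~ a x -> f x = None} -> pmap f (filter a s) = pmap f s.
Proof.
elim: s => [|x s IH] //= fa; rewrite -IH => [|y ys]; last by apply: fa; rewrite inE ys orbT.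
by case ax: (a x) => //=; rewrite fa ?mem_head ?ax.
Qed.

Lemma uniq_filter_predC (T : eqType) (a : pred T) s :
  uniq (filter a s) -> uniq (filter (predC a) s) -> uniq s.
Proof.
elim: s => [|x s IH] //=; case ax: (a x) => /=.
- case/andP=> xs u1 u2; rewrite IH // andbT; apply: contra xs => xs.
  by rewrite mem_filter ax.
- move=> u1 /andP [xs u2]; rewrite IH // andbT; apply: contra xs => xs.
  by rewrite mem_filter /= ax.
Qed.

Section Blocks.
Variables (T : eqType) (P : pred T).

Fixpoint blocks (s : seq T) : seq (seq T) :=
  if s is x :: s' then
    let bs := blocks s' in
    if P x then [::] :: bs else (x :: head [::] bs) :: behead bs
  else [:: [::]].

Fixpoint weave (s : seq T) (bs : seq (seq T)) : seq T :=
  match s, bs with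
  | [::], _ => flatten bs
  | x :: s', [::] => x :: weave s' [::]
  | x :: s', b :: bs' => b ++ x :: weave s' bs'
  end.

Lemma blocks_head_behead s : blocks s = head [::] (blocks s) :: behead (blocks s).
Proof. by case: s => [|x s] //=; case: (P x). Qed.

Lemma size_blocks s : size (blocks s) = (count P s).+1.
Proof.
elim: s => [|x s IH] //=; case: (P x) => /=; first by rewrite IH.
by rewrite blocks_head_behead /= in IH *; rewrite IH.
Qed.

Lemma flatten_blocks s : flatten (blocks s) = filter (predC P) s.
Proof.
elim: s => [|x s IH] //=; case: (P x) => //=.
by rewrite -IH [in RHS]blocks_head_behead.
Qed.

Lemma mem_blocks s i x : x \in nth [::] (blocks s) i -> (x \in s) && ~~ P x.
Proof.
by move/mem_nth_flatten; rewrite flatten_blocks mem_filter andbC.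
Qed.

Lemma weave_cons s x b bs : weave s ((x :: b) :: bs) = x :: weave s (b :: bs).
Proof. by case: s. Qed.

Lemma weave_blocks s : weave (filter P s) (blocks s) = s.
Proof.
elim: s => [|x s IH] //=; case: (P x) => /=; first by rewrite IH.
by rewrite weave_cons -blocks_head_behead IH.
Qed.

Lemma blocks_inj s t :
  filter P s = filter P t -> blocks s = blocks t -> s = t.
Proof. by move=> eP eb; rewrite -(weave_blocks s) -(weave_blocks t) eP eb. Qed.

Lemma blocks_free b : ~~ has P b -> blocks b = [:: b].
Proof. by elim: b => [|x b IH] //= /norP [/negbTE -> /IH ->]. Qed.

Lemma blocks_free_cat b s : ~~ has P b ->
  blocks (b ++ s) = (b ++ head [::] (blocks s)) :: behead (blocks s).
Proof.
elim: b => [|x b IH] /=; first by rewrite -blocks_head_behead.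
by case/norP => /negbTE -> /IH ->.
Qed.

Section Weave.
Variables (s : seq T) (bs : seq (seq T)).
Hypotheses (sP : all P s) (bsP : all (fun b => ~~ has P b) bs).

Lemma blocks_weave : size bs = (size s).+1 -> blocks (weave s bs) = bs.
Proof.
elim: s bs sP bsP => [|x s' IH] [|b bs'] //=.
  by case: bs' => [|? ?] _ /andP [bP _] // _; rewrite cats0 blocks_free.
case/andP=> Px s'P /andP [bP bs'P] [sz].
by rewrite blocks_free_cat //= Px IH //= cats0.
Qed.

Lemma filter_weave : filter P (weave s bs) = s.
Proof.
have filter_free b : ~~ has P b -> filter P b = [::].
  by rewrite has_filter negbK => /eqP.
elim: s bs sP bsP => [|x s' IH] [|b bs'] //=.
- have free_flatten cs : all (fun c => ~~ has P c) cs -> filter P (flatten cs) = [::].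
    by elim: cs => //= c cs IH /andP [/filter_free fc /IH]; rewrite filter_cat fc.
  by move=> _; apply: (free_flatten (b :: bs')).
- by case/andP=> Px s'P _; rewrite Px IH.
case/andP=> Px s'P /andP [bP bs'P].
by rewrite filter_cat filter_free //= Px IH.
Qed.
End Weave.


Lemma blocks_filter (Q : pred T) s : {in s, forall x, P x -> Q x} ->
  blocks (filter Q s) = map (filter Q) (blocks s).
Proof.
elim: s => [|x s IH] //= PQ.
have {}IH := IH (fun y ys => PQ y (@mem_behead _ (x :: s) _ ys)).
have := PQ x (mem_head _ _).
rewrite [blocks s]blocks_head_behead in IH *.
by case Px: (P x); case Qx: (Q x) => //= PQx; rewrite ?IH /= ?Px ?Qx //; move: (PQx isT).
Qed.

Lemma filter_nth_blocks s t i :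
  {in s, forall x, P x -> x \in t} -> {in t, forall x, P x -> x \in s} ->
  filter [in t] s = filter [in s] t ->
  filter [in t] (nth [::] (blocks s) i) = filter [in s] (nth [::] (blocks t) i).
Proof. by move=> st ts e; rewrite -!nth_map_filter -!blocks_filter // e. Qed.

Lemma mem_blocks_nth s x : x \in s -> ~~ P x -> exists i, x \in nth [::] (blocks s) i.
Proof.
move=> xs nPx; have : x \in flatten (blocks s) by rewrite flatten_blocks mem_filter /= nPx.
by case/flattenP=> b /(nthP [::]) [i _ <-]; exists i.
Qed.
End Blocks.




Definition is_low {M N} (l : letter M N) : bool := if l is inl _ then true else false.

Definition word_le {M N} (x y : seq (letter M N)) : Prop :=
  [/\ forall l, is_low l -> l \in y -> l \in x,
      forall l, ~~ is_low l -> l \in x -> l \in y &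
      filter [in y] x = filter [in x] y].

Lemma word_le_map M N M' N' (f : letter M' N' -> letter M N) (x y : seq (letter M' N')) :
  injective f -> (forall l, is_low (f l) = is_low l) ->
  word_le (map f x) (map f y) <-> word_le x y.
Proof.
move=> f_inj f_low.
have filter_map_mem s t : filter [in map f t] (map f s) = map f (filter [in t] s).
  by rewrite filter_map; congr map; apply: eq_filter => l /=; rewrite mem_map.
split=> -[low_yx up_xy filter_xy]; split.
- by move=> l ll; rewrite -!(mem_map f_inj); apply: low_yx; rewrite f_low.
- by move=> l ll; rewrite -!(mem_map f_inj); apply: up_xy; rewrite f_low.
- by apply: (inj_map f_inj); rewrite -!filter_map_mem.
- by move=> _ /[swap] /mapP [l ly ->]; rewrite f_low mem_map // => /low_yx; apply.
- by move=> _ /[swap] /mapP [l lx ->]; rewrite f_low mem_map // => /up_xy; apply.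
- by rewrite !filter_map_mem filter_xy.
Qed.

Lemma is_shuffle_subseq M N (x y : seq (letter M N)) :
  is_shuffle x -> subseq y x -> is_shuffle y.
Proof.
case/and3P=> x_uniq x_low x_up yx; apply/and3P; split.
- exact: subseq_uniq yx x_uniq.
- exact (subseq_sorted ltn_trans (subseq_pmap low_idx yx) x_low).
- exact (subseq_sorted ltn_trans (subseq_pmap up_idx yx) x_up).
Qed.

Section WordOrder.
Variables M N : nat.
Implicit Types (x y z : seq (letter M N)) (a b : W M N).

Lemma word_le_refl x : word_le x x.
Proof. by []. Qed.

Lemma word_le_trans x y z : word_le x y -> word_le y z -> word_le x z.
Proof.
case=> [low_yx up_xy filter_xy] [low_zy up_yz filter_yz].
have xz_y l : l \in x -> l \in z -> l \in y.
  by move=> lx lz; case ll: (is_low l); [apply: low_zy | apply: up_xy; rewrite ?ll].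
split.
- by move=> l ll /(low_zy l ll); apply: low_yx.
- by move=> l ll /(up_xy l ll); apply: up_yz.
have filter_y (s t : seq (letter M N)) : {in s, forall l, l \in t -> l \in y} ->
    filter [in t] s = filter [in t] (filter [in y] s).
  move=> sty; rewrite -filter_predI; apply: eq_in_filter => l ls /=.
  by case lt: (l \in t); rewrite // sty.
rewrite (filter_y x z) // filter_xy filter_swap filter_yz -filter_y //.
by move=> l lz lx; apply: xz_y.
Qed.

Lemma word_le_subseq_low x y : uniq x -> subseq y x ->
  {in x, forall l, l \notin y -> is_low l} -> word_le x y.
Proof.
move=> x_uniq yx x_low; split.
- by move=> l _ ly; apply: (mem_subseq yx ly).
- by move=> l /negP nl lx; apply/negPn/negP => /(x_low l lx).
have <- : y = filter [in y] x by apply/subseq_uniqP.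
by apply/esym/all_filterP/allP => l ly; apply: (mem_subseq yx ly).
Qed.

Lemma word_le_subseq_up x y : uniq y -> subseq x y ->
  {in y, forall l, l \notin x -> ~~ is_low l} -> word_le x y.
Proof.
move=> y_uniq xy y_up; split.
- by move=> l ll ly; apply/negPn/negP => /(y_up l ly); rewrite ll.
- by move=> l _ lx; apply: (mem_subseq xy lx).
have <- : x = filter [in x] y by apply/subseq_uniqP.
by apply/all_filterP/allP => l lx; apply: (mem_subseq xy lx).
Qed.

Lemma cover_word_le x y : is_shuffle x -> is_shuffle y -> shuffle_cover x y -> word_le x y.
Proof.
case/and3P=> x_uniq _ _; case/and3P=> y_uniq _ _.
have mem_split_cat (s1 s2 : seq (letter M N)) (z l : letter M N) :
    l \in s1 ++ z :: s2 -> l \notin s1 ++ s2 -> l = z.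
  by rewrite !mem_cat inE; case: (l \in s1) => //=; case: (l \in s2); rewrite ?orbF // => /eqP.
case=> [[s1 [s2 [a [ex ey]]]] | [s1 [s2 [b [ex [ey _]]]]]]; subst x y.
- apply: word_le_subseq_low => //; first by rewrite subseq_cat2l subseq_cons.
  by move=> l lx ly; rewrite (mem_split_cat _ _ _ _ lx ly).
- apply: word_le_subseq_up => //; first by rewrite subseq_cat2l subseq_cons.
  by move=> l lx ly; rewrite (mem_split_cat _ _ _ _ lx ly).
Qed.

Lemma shuffle_le_word_le a b : shuffle_le a b -> word_le (val a) (val b).
Proof.
elim=> [{}a {}b | {}a | a' b' c' _ ab _ bc].
- exact: cover_word_le (valP a) (valP b).
- exact: word_le_refl.
- exact: word_le_trans ab bc.
Qed.

Definition sub_word a (Q : pred (letter M N)) : W M N :=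
  exist _ (filter Q (val a)) (is_shuffle_subseq (valP a) (filter_subseq _ _)).

Definition rem_word a l : W M N :=
  exist _ (rem l (val a)) (is_shuffle_subseq (valP a) (rem_subseq _ _)).

Lemma sub_word_rem a Q l : ~~ Q l -> sub_word (rem_word a l) Q = sub_word a Q.
Proof.
move=> nQl; apply: val_inj => /=; case/and3P: (valP a) => a_uniq _ _.
rewrite rem_filter // -filter_predI; apply: eq_filter => l' /=.
by case: eqP => [->|]; rewrite ?(negbTE nQl) ?andbT.
Qed.

Lemma le_rem_word a l : l \in val a -> is_low l -> shuffle_le a (rem_word a l).
Proof.
case/rem_split=> s1 [s2 [ea erem]]; case: l ea erem => // i ea erem _.
by apply: rt_step; left; exists s1, s2, i; rewrite /= erem.
Qed.

Lemma rem_word_le a l : l \in val a -> ~~ is_low l -> shuffle_le (rem_word a l) a.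
Proof.
case/rem_split=> s1 [s2 [ea erem]]; case: l ea erem => // j ea erem _.
by apply: rt_step; right; exists s1, s2, j; rewrite /= erem -ea (valP a).
Qed.

Lemma sub_word_id a (Q : pred (letter M N)) : count (predC Q) (val a) = 0 -> sub_word a Q = a.
Proof.
move=> cnt; apply: val_inj; apply/all_filterP.
by rewrite -[all _ _]negbK -has_predC has_count cnt.
Qed.

Lemma le_sub_word a Q : {in val a, forall l, ~~ Q l -> is_low l} -> shuffle_le a (sub_word a Q).
Proof.
move: {2}(count _ _) (erefl (count (predC Q) (val a))) => n.
elim: n a => [|n IH] a cnt a_low; first by rewrite sub_word_id //; apply: rt_refl.
have /hasP [l la nQl] : has (predC Q) (val a) by rewrite has_count cnt.
rewrite -(sub_word_rem a nQl); apply: rt_trans (le_rem_word la (a_low l la nQl)) _.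
apply: IH => [|l' /mem_rem]; last exact: a_low.
by rewrite /= count_rem la nQl cnt subn1.
Qed.

Lemma sub_word_le a Q : {in val a, forall l, ~~ Q l -> ~~ is_low l} -> shuffle_le (sub_word a Q) a.
Proof.
move: {2}(count _ _) (erefl (count (predC Q) (val a))) => n.
elim: n a => [|n IH] a cnt a_up; first by rewrite sub_word_id //; apply: rt_refl.
have /hasP [l la nQl] : has (predC Q) (val a) by rewrite has_count cnt.
rewrite -(sub_word_rem a nQl); apply: rt_trans (rem_word_le la (a_up l la nQl)).
apply: IH => [|l' /mem_rem]; last exact: a_up.
by rewrite /= count_rem la nQl cnt subn1.
Qed.

Lemma word_le_shuffle_le a b : word_le (val a) (val b) -> shuffle_le a b.
Proof.
case=> low_ba up_ab filter_ab.
have mid : sub_word a [in val b] = sub_word b [in val a] by apply: val_inj.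
apply: (@rt_trans _ _ _ (sub_word a [in val b])); last rewrite mid.
- by apply: le_sub_word => l la; apply: contraR => /up_ab ->.
- by apply: sub_word_le => l lb; apply: contra => /low_ba ->.
Qed.

Lemma shuffle_leP a b : shuffle_le a b <-> word_le (val a) (val b).
Proof. by split; [apply: shuffle_le_word_le | apply: word_le_shuffle_le]. Qed.

Lemma shuffle_between x y z : is_shuffle x -> is_shuffle z -> uniq y ->
  word_le x y -> word_le y z -> is_shuffle y.
Proof.
case/and3P=> _ x_low _; case/and3P=> _ _ z_up y_uniq [low_yx _ filter_xy] [_ up_yz filter_yz].
apply/and3P; split => //.
- rewrite -(@pmap_filter_id _ _ _ [in x]) -?filter_xy; last first.
    by case=> // i iy /negP; case; apply: low_yx.
  exact (subseq_sorted ltn_trans (subseq_pmap low_idx (filter_subseq _ _)) x_low).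
- rewrite -(@pmap_filter_id _ _ _ [in z]) ?filter_yz; last first.
    by case=> // j jy /negP; case; apply: up_yz.
  exact (subseq_sorted ltn_trans (subseq_pmap up_idx (filter_subseq _ _)) z_up).
Qed.
End WordOrder.

Section BlockOrder.
Variables (M N : nat) (P : pred (letter M N)) (B : nat -> seq (letter M N)).
Hypothesis B_disjoint : forall i j l, l \in B i -> l \in B j -> i = j.
Implicit Types x y : seq (letter M N).

Definition local x := forall i, {subset nth [::] (blocks P x) i <= B i}.

Lemma mem_nth_blocks_local x i l : local x ->
  l \in x -> ~~ P l -> l \in B i -> l \in nth [::] (blocks P x) i.
Proof.
move=> x_loc lx nPl lBi; case: (mem_blocks_nth lx nPl) => j lj.
by rewrite (B_disjoint lBi (x_loc j l lj)).
Qed.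

Lemma filter_local x y i : local x -> local y ->
  filter [in y] (nth [::] (blocks P x) i) =
  filter [in nth [::] (blocks P y) i] (nth [::] (blocks P x) i).
Proof.
move=> x_loc y_loc; apply: eq_in_filter => l lxi; apply/idP/idP => [ly|/mem_blocks/andP [] //].
have /andP [_ nPl] := mem_blocks lxi.
exact: mem_nth_blocks_local y_loc ly nPl (x_loc i l lxi).
Qed.

Lemma word_le_blocks x y : local x -> local y -> filter P x = filter P y ->
  word_le x y <-> forall i, word_le (nth [::] (blocks P x) i) (nth [::] (blocks P y) i).
Proof.
move=> x_loc y_loc Pxy.
have P_sub (s t : seq (letter M N)) :
    filter P s = filter P t -> {in s, forall l, P l -> l \in t}.
  move=> st l ls Pl; have : l \in filter P s by rewrite mem_filter Pl.
  by rewrite st mem_filter => /andP [].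
have xy := P_sub _ _ Pxy; have yx := P_sub _ _ (esym Pxy).
split=> [[low_yx up_xy filter_xy] i | le_blocks].
  split; last by rewrite -!filter_local // filter_nth_blocks.
  + move=> l ll lyi; have /andP [ly nPl] := mem_blocks lyi.
    exact: mem_nth_blocks_local x_loc (low_yx l ll ly) nPl (y_loc i l lyi).
  + move=> l ll lxi; have /andP [lx nPl] := mem_blocks lxi.
    exact: mem_nth_blocks_local y_loc (up_xy l ll lx) nPl (x_loc i l lxi).
split.
- move=> l ll ly; case Pl: (P l); first exact: yx.
  case: (mem_blocks_nth ly (negbT Pl)) => i lyi.
  by case: (le_blocks i) => low_yxi _ _; case/mem_blocks/andP: (low_yxi l ll lyi).
- move=> l ll lx; case Pl: (P l); first exact: xy.
  case: (mem_blocks_nth lx (negbT Pl)) => i lxi.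
  by case: (le_blocks i) => _ up_xyi _; case/mem_blocks/andP: (up_xyi l ll lxi).
apply: (blocks_inj (P := P)).
  have keep (s t : seq (letter M N)) :
      {in s, forall l, P l -> l \in t} -> filter [in t] (filter P s) = filter P s.
    move=> st; apply/all_filterP/allP => l.
    by rewrite mem_filter => /andP [Pl ls]; apply: st.
  by rewrite filter_swap (keep x y) // (filter_swap P) keep.
rewrite !blocks_filter //; apply: (@eq_from_nth _ [::]).
  by rewrite !size_map !size_blocks -!size_filter Pxy.
move=> i _; rewrite !nth_map_filter (filter_local i x_loc y_loc) (filter_local i y_loc x_loc).
by case: (le_blocks i).
Qed.
End BlockOrder.

Definition shuffle_in M N (L X c : seq (letter M N)) : Prop :=
  [/\ uniq c, {subset c <= L ++ X}, subseq (filter is_low c) L &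
      subseq (filter (predC is_low) c) X].

Lemma word_le_shuffle_in_low M N (L X c : seq (letter M N)) : uniq L -> all is_low L ->
  shuffle_in L X c -> word_le L c.
Proof.
move=> L_uniq L_low [c_uniq _ cL _]; apply: (@word_le_trans _ _ _ (filter is_low c)).
  by apply: word_le_subseq_low => // l /(allP L_low).
by apply: word_le_subseq_up (filter_subseq _ _) _ => // l lc; rewrite mem_filter lc andbT.
Qed.

Lemma word_le_shuffle_in_up M N (L X c : seq (letter M N)) : uniq X -> all (predC is_low) X ->
  shuffle_in L X c -> word_le c X.
Proof.
move=> X_uniq X_up [c_uniq _ _ cX]; apply: (@word_le_trans _ _ _ (filter (predC is_low) c)).
  apply: word_le_subseq_low (filter_subseq _ _) _ => // l lc.
  by rewrite mem_filter lc andbT negbK.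
by apply: word_le_subseq_up => // l /(allP X_up).
Qed.

Section Relabel.
Variables (M N : nat) (L X : seq (letter M N)).
Hypotheses (L_uniq : uniq L) (X_uniq : uniq X).
Hypotheses (L_low : all is_low L) (X_up : all (predC is_low) X).
Local Notation letter' := (letter (size L) (size X)).

Definition relabel (l : letter') : letter M N :=
  match l with inl i => tnth (in_tuple L) i | inr j => tnth (in_tuple X) j end.

Definition unrelabel (l : letter M N) : option letter' :=
  if is_low l then omap inl (insub (index l L)) else omap inr (insub (index l X)).

Definition low_ord (l : letter') := if l is inl i then Some i else None.
Definition up_ord (l : letter') := if l is inr j then Some j else None.

Lemma is_low_relabel l : is_low (relabel l) = is_low l.
Proof.
case: l => i /=; first exact: (allP L_low _ (mem_tnth i (in_tuple L))).
exact: negbTE (allP X_up _ (mem_tnth i (in_tuple X))).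
Qed.

Lemma relabelK : pcancel relabel unrelabel.
Proof.
move=> l; rewrite /unrelabel is_low_relabel; case: l => i /=.
- by rewrite (tnth_nth (tnth (in_tuple L) i)) index_uniq // valK.
- by rewrite (tnth_nth (tnth (in_tuple X) i)) index_uniq // valK.
Qed.

Lemma relabel_inj : injective relabel.
Proof. exact: pcan_inj relabelK. Qed.

Lemma unrelabelK l : l \in L ++ X -> omap relabel (unrelabel l) = Some l.
Proof.
rewrite mem_cat /unrelabel; case ll: (is_low l) => lLX.
- have lL : l \in L by case/orP: lLX => // /(allP X_up); rewrite /= ll.
  by rewrite insubT ?index_mem //= => i; rewrite (tnth_nth l) nth_index.
- have lX : l \in X by case/orP: lLX => // /(allP L_low); rewrite ll.
  by rewrite insubT ?index_mem //= => j; rewrite (tnth_nth l) nth_index.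
Qed.

Lemma relabel_unrelabel c : {subset c <= L ++ X} -> map relabel (pmap unrelabel c) = c.
Proof.
elim: c => [|l c IH] //= cLX; have := unrelabelK (cLX l (mem_head _ _)).
case: (unrelabel l) => //= l' [->]; rewrite IH // => l'' l''c.
by apply: cLX; rewrite inE l''c orbT.
Qed.

Lemma filter_low_relabel y :
  filter is_low (map relabel y) = map (tnth (in_tuple L)) (pmap low_ord y).
Proof. by elim: y => [|l y IH] //=; rewrite is_low_relabel; case: l => i //=; rewrite IH. Qed.

Lemma filter_up_relabel y :
  filter (predC is_low) (map relabel y) = map (tnth (in_tuple X)) (pmap up_ord y).
Proof. by elim: y => [|l y IH] //=; rewrite is_low_relabel; case: l => i //=; rewrite IH. Qed.

Lemma sorted_low_relabel y :
  sorted ltn (pmap low_idx y) = subseq (filter is_low (map relabel y)) L.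
Proof.
rewrite filter_low_relabel -sorted_ltn_tnth //; congr sorted.
by elim: y => [|[i|j] y IH] //=; rewrite IH.
Qed.

Lemma sorted_up_relabel y :
  sorted ltn (pmap up_idx y) = subseq (filter (predC is_low) (map relabel y)) X.
Proof.
rewrite filter_up_relabel -sorted_ltn_tnth //; congr sorted.
by elim: y => [|[i|j] y IH] //=; rewrite IH.
Qed.

Lemma shuffle_in_relabel y : is_shuffle y -> shuffle_in L X (map relabel y).
Proof.
case/and3P=> y_uniq y_low y_up; split.
- by rewrite map_inj_uniq //; apply: relabel_inj.
- by move=> _ /mapP [l _ ->]; rewrite mem_cat; case: l => i; rewrite /= mem_tnth ?orbT.
- by rewrite -sorted_low_relabel.
- by rewrite -sorted_up_relabel.
Qed.

Lemma is_shuffle_unrelabel c : shuffle_in L X c -> is_shuffle (pmap unrelabel c).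
Proof.
case=> c_uniq cLX c_low c_up; have e := relabel_unrelabel cLX.
apply/and3P; split.
- by rewrite -(map_inj_uniq relabel_inj) e.
- by rewrite sorted_low_relabel e.
- by rewrite sorted_up_relabel e.
Qed.
End Relabel.

Section Interval.
Variables (M N : nat) (u w : W M N).
Hypothesis uw : word_le (val u) (val w).
Implicit Types v : seq (letter M N).

Definition common : seq (letter M N) := filter [in val w] (val u).
Definition in_common : pred (letter M N) := [in common].
Definition nblocks := (size common).+1.
Definition low_block i := nth [::] (blocks in_common (val u)) i.
Definition up_block i := nth [::] (blocks in_common (val w)) i.
Definition block_set i := low_block i ++ up_block i.
Definition between v := [/\ uniq v, word_le (val u) v & word_le v (val w)].

Lemma uniq_u : uniq (val u). Proof. by case/and3P: (valP u). Qed.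
Lemma uniq_w : uniq (val w). Proof. by case/and3P: (valP w). Qed.

Lemma in_commonE l : in_common l = (l \in val u) && (l \in val w).
Proof. by rewrite /in_common /common mem_filter andbC. Qed.

Lemma mem_low_block i l : l \in low_block i -> [/\ l \in val u, l \notin val w & is_low l].
Proof.
case/mem_blocks/andP=> lu; rewrite in_commonE lu /= => nlw; split => //.
by case: uw => _ up_uw _; apply: contraR nlw => /up_uw; apply.
Qed.

Lemma mem_up_block i l : l \in up_block i -> [/\ l \in val w, l \notin val u & ~~ is_low l].
Proof.
case/mem_blocks/andP=> lw; rewrite in_commonE lw andbT => nlu; split => //.
by case: uw => low_wu _ _; apply: contra nlu => /low_wu; apply.
Qed.

Lemma low_block_uniq i : uniq (low_block i).
Proof. by apply: uniq_flatten_nth; rewrite flatten_blocks filter_uniq // uniq_u. Qed.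

Lemma up_block_uniq i : uniq (up_block i).
Proof. by apply: uniq_flatten_nth; rewrite flatten_blocks filter_uniq // uniq_w. Qed.

Lemma low_block_low i : all is_low (low_block i).
Proof. by apply/allP => l /mem_low_block []. Qed.

Lemma up_block_up i : all (predC is_low) (up_block i).
Proof. by apply/allP => l /mem_up_block []. Qed.

Lemma block_set_disjoint i j l : l \in block_set i -> l \in block_set j -> i = j.
Proof.
have block_side k : l \in block_set k -> if is_low l then l \in low_block k else l \in up_block k.
  rewrite mem_cat => /orP [lk|lk].
  + by have [_ _ ->] := mem_low_block lk.
  + by have [_ _ /negbTE ->] := mem_up_block lk.
move=> /block_side + /block_side; case: (is_low l) => li lj.
- by apply: uniq_flatten_nth_eq li lj; rewrite flatten_blocks filter_uniq // uniq_u.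
- by apply: uniq_flatten_nth_eq li lj; rewrite flatten_blocks filter_uniq // uniq_w.
Qed.

Lemma filter_in_common_u : filter in_common (val u) = common.
Proof. by apply: eq_in_filter => l lu; rewrite in_commonE lu. Qed.

Lemma between_u : between (val u).
Proof. by split; [exact: uniq_u | exact: word_le_refl | exact: uw]. Qed.

Lemma between_w : between (val w).
Proof. by split; [exact: uniq_w | exact: uw | exact: word_le_refl]. Qed.

Section Between.
Variables (v : seq (letter M N)) (v_between : between v).
Local Notation v_block i := (nth [::] (blocks in_common v) i).

Lemma common_sub : {subset common <= v}.
Proof.
have [_ [_ up_uv _] [low_wv _ _]] := v_between.
move=> l; rewrite -[l \in common]/(in_common l) in_commonE => /andP [lu lw].
by case ll: (is_low l); [apply: low_wv | apply: up_uv; rewrite ?ll].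
Qed.

Lemma in_common_u : {in v, forall l, in_common l -> l \in val u}.
Proof. by move=> l _; rewrite in_commonE => /andP []. Qed.

Lemma in_common_w : {in v, forall l, in_common l -> l \in val w}.
Proof. by move=> l _; rewrite in_commonE => /andP []. Qed.

Lemma filter_common : filter in_common v = common.
Proof.
have [_ [_ _ filter_uv] _] := v_between.
have -> : filter in_common v = filter in_common (filter [in val u] v).
  rewrite -filter_predI; apply: eq_in_filter => l lv /=.
  by case c: (in_common l); rewrite //= (in_common_u lv c).
rewrite -filter_uv filter_swap filter_in_common_u.
by apply/all_filterP/allP => l /common_sub.
Qed.

Lemma filter_u_block i : filter [in val u] (v_block i) = filter [in v] (low_block i).
Proof.
have [_ [_ _ filter_uv] _] := v_between.
by rewrite (filter_nth_blocks (s := val u)) //; [move=> l _ /common_sub | exact: in_common_u].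
Qed.

Lemma filter_w_block i : filter [in val w] (v_block i) = filter [in v] (up_block i).
Proof.
have [_ _ [_ _ filter_vw]] := v_between.
by rewrite filter_nth_blocks //; [exact: in_common_w | move=> l _ /common_sub].
Qed.

Lemma mem_v_block i l : l \in v_block i ->
  if is_low l then l \in low_block i else l \in up_block i.
Proof.
move=> li; have [v_uniq [low_vu _ _] [_ up_vw _]] := v_between.
have /andP [lv _] := mem_blocks li.
case: ifPn => ll.
- have : l \in filter [in val u] (v_block i) by rewrite mem_filter li (low_vu l ll lv).
  by rewrite filter_u_block mem_filter => /andP [].
- have : l \in filter [in val w] (v_block i) by rewrite mem_filter li (up_vw l ll lv).
  by rewrite filter_w_block mem_filter => /andP [].
Qed.

Lemma local_between : local in_common block_set v.
Proof. by move=> i l /mem_v_block; rewrite mem_cat; case: (is_low l) => ->; rewrite ?orbT. Qed.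

Lemma shuffle_in_between i : shuffle_in (low_block i) (up_block i) (v_block i).
Proof.
have [v_uniq _ _] := v_between.
split; last 2 first.
- rewrite -(eq_in_filter (a1 := [in val u])) ?filter_u_block ?filter_subseq // => l li.
  move: (mem_v_block li); case: (is_low l); first by case/mem_low_block.
  by case/mem_up_block => _ /negbTE.
- rewrite -(eq_in_filter (a1 := [in val w])) ?filter_w_block ?filter_subseq // => l li.
  move: (mem_v_block li) => /=; case: (is_low l); last by case/mem_up_block.
  by case/mem_low_block => _ /negbTE.
- by apply: uniq_flatten_nth; rewrite flatten_blocks filter_uniq.
- exact: local_between.
Qed.
End Between.

Lemma word_le_between x y : between x -> between y ->
  word_le x y <->
  forall i, word_le (nth [::] (blocks in_common x) i) (nth [::] (blocks in_common y) i).
Proof.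
move=> x_between y_between.
apply: (word_le_blocks block_set_disjoint (local_between x_between) (local_between y_between)).
by rewrite !filter_common.
Qed.

Section WeaveCommon.
Variables (bs : seq (seq (letter M N))) (size_bs : size bs = nblocks).
Hypothesis bs_in : forall i, shuffle_in (low_block i) (up_block i) (nth [::] bs i).
Local Notation v := (weave common bs).

Lemma mem_bs i l : l \in nth [::] bs i -> l \in block_set i.
Proof. by case: (bs_in i) => _ sub _ _; apply: sub. Qed.

Lemma bs_not_common i l : l \in nth [::] bs i -> ~~ in_common l.
Proof.
rewrite in_commonE => /mem_bs; rewrite mem_cat.
by case/orP => [/mem_low_block [_ /negbTE -> _] | /mem_up_block [_ /negbTE -> _]]; rewrite ?andbF.
Qed.

Lemma bs_common_free : all (fun b => ~~ has in_common b) bs.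
Proof. by apply/allP => b /(nthP [::]) [i _ <-]; apply/hasP => -[l /bs_not_common/negP]. Qed.

Lemma blocks_weave_common : blocks in_common v = bs.
Proof. by rewrite blocks_weave ?bs_common_free ?size_bs //; apply/allP. Qed.

Lemma filter_weave_common : filter in_common v = common.
Proof. by rewrite filter_weave ?bs_common_free //; apply/allP. Qed.

Lemma local_weave : local in_common block_set v.
Proof. by move=> i l; rewrite blocks_weave_common => /mem_bs. Qed.

Lemma uniq_weave : uniq v.
Proof.
apply: (uniq_filter_predC (a := in_common)).
  by rewrite filter_weave_common filter_uniq // uniq_u.
rewrite -flatten_blocks blocks_weave_common; apply: uniq_flatten.
  by move=> i; case: (bs_in i).
by move=> i j l /mem_bs li /mem_bs lj; apply: block_set_disjoint li lj.
Qed.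

Lemma between_weave : between v.
Proof.
split; first exact: uniq_weave.
- apply/(word_le_blocks block_set_disjoint (local_between between_u) local_weave).
    by rewrite filter_in_common_u filter_weave_common.
  move=> i; rewrite blocks_weave_common.
  exact: word_le_shuffle_in_low (low_block_uniq i) (low_block_low i) (bs_in i).
- apply/(word_le_blocks block_set_disjoint local_weave (local_between between_w)).
    by rewrite filter_weave_common (filter_common between_w).
  move=> i; rewrite blocks_weave_common.
  exact: word_le_shuffle_in_up (up_block_uniq i) (up_block_up i) (bs_in i).
Qed.

Lemma is_shuffle_weave : is_shuffle v.
Proof.
have [v_uniq uv vw] := between_weave.
exact: shuffle_between (valP u) (valP w) v_uniq uv vw.
Qed.
End WeaveCommon.

Lemma size_blocks_between v : between v -> size (blocks in_common v) = nblocks.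
Proof. by move=> v_between; rewrite size_blocks -size_filter filter_common. Qed.

Definition interval := {v : W M N | shuffle_le u v /\ shuffle_le v w}.

Lemma interval_inj (x y : interval) : val (sval x) = val (sval y) -> x = y.
Proof.
case: x y => [x xP] [y yP] /= /val_inj exy; subst y.
by rewrite (proof_irrelevance _ xP yP).
Qed.

Lemma between_interval (x : interval) : between (val (sval x)).
Proof.
case: x => v [uv vw] /=; split; first by case/and3P: (valP v).
- exact: shuffle_le_word_le uv.
- exact: shuffle_le_word_le vw.
Qed.

Local Notation block_W i := (W (size (low_block i)) (size (up_block i))).
Local Notation relabel_block i := (@relabel M N (low_block i) (up_block i)).
Local Notation unrelabel_block i := (@unrelabel M N (low_block i) (up_block i)).
Local Notation x_block x i := (nth [::] (blocks in_common (val (sval x))) i).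

Definition decompose (x : interval) (i : 'I_nblocks) : block_W i :=
  exist _ (pmap (unrelabel_block i) (x_block x i))
    (is_shuffle_unrelabel (low_block_uniq i) (up_block_uniq i) (low_block_low i) (up_block_up i)
       (shuffle_in_between (between_interval x) i)).

Definition family_blocks (y : forall i : 'I_nblocks, block_W i) : seq (seq (letter M N)) :=
  [seq map (relabel_block i) (val (y i)) | i : 'I_nblocks <- enum 'I_nblocks].

Lemma size_family_blocks y : size (family_blocks y) = nblocks.
Proof. by rewrite size_map size_enum_ord. Qed.

Lemma nth_family_blocks y (i : 'I_nblocks) :
  nth [::] (family_blocks y) i = map (relabel_block i) (val (y i)).
Proof. by rewrite (nth_map i) ?size_enum_ord // nth_ord_enum. Qed.

Lemma shuffle_in_family_blocks y i :
  shuffle_in (low_block i) (up_block i) (nth [::] (family_blocks y) i).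
Proof.
case: (ltnP i nblocks) => [lt_i|ge_i]; last first.
  by rewrite nth_default ?size_family_blocks //; split; rewrite ?sub0seq.
rewrite -[i]/(val (Ordinal lt_i)) nth_family_blocks; set j := Ordinal lt_i.
exact (shuffle_in_relabel (low_block_uniq j) (up_block_uniq j) (low_block_low j) (up_block_up j)
  (valP (y j))).
Qed.

Definition compose_W y : W M N :=
  exist _ (weave common (family_blocks y))
    (is_shuffle_weave (size_family_blocks y) (shuffle_in_family_blocks y)).

Lemma compose_W_in_interval y : shuffle_le u (compose_W y) /\ shuffle_le (compose_W y) w.
Proof.
have [_ uv vw] := between_weave (size_family_blocks y) (shuffle_in_family_blocks y).
by split; apply: word_le_shuffle_le.
Qed.

Definition compose y : interval := exist _ (compose_W y) (compose_W_in_interval y).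

Lemma decomposeK : cancel decompose compose.
Proof.
move=> x; apply: interval_inj => /=.
have x_between := between_interval x.
rewrite /family_blocks (eq_map (g := fun i : 'I_nblocks => x_block x i)); last first.
  move=> i /=; case: (shuffle_in_between x_between i) => _ sub _ _.
  exact (relabel_unrelabel (low_block_low i) (up_block_up i) sub).
rewrite -[RHS](weave_blocks in_common) (filter_common x_between); congr weave.
rewrite (@map_comp _ _ _ (nth [::] _) val) val_enum_ord map_nth_iota0.
  by rewrite take_oversize ?size_blocks_between.
by rewrite size_blocks_between.
Qed.

Lemma composeK : cancel compose decompose.
Proof.
move=> y; apply: functional_extensionality_dep => i; apply: val_inj => /=.
rewrite blocks_weave_common ?size_family_blocks //; last exact: shuffle_in_family_blocks.
by rewrite nth_family_blocks (map_pK (relabelK (low_block_uniq i) (up_block_uniq i) _ _)) //;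
  [apply: low_block_low | apply: up_block_up].
Qed.

Lemma shuffle_le_decompose x y (i : 'I_nblocks) :
  shuffle_le (decompose x i) (decompose y i) <-> word_le (x_block x i) (x_block y i).
Proof.
have [_ x_sub _ _] := shuffle_in_between (between_interval x) i.
have [_ y_sub _ _] := shuffle_in_between (between_interval y) i.
rewrite shuffle_leP /= -(word_le_map _ _ (relabel_inj (low_block_uniq i) (up_block_uniq i)
  (low_block_low i) (up_block_up i)) (is_low_relabel (low_block_low i) (up_block_up i))).
by rewrite !relabel_unrelabel ?low_block_low ?up_block_up.
Qed.

Lemma shuffle_le_interval x y :
  shuffle_le (sval x) (sval y) <->
  forall i : 'I_nblocks, shuffle_le (decompose x i) (decompose y i).
Proof.
have [x_between y_between] := (between_interval x, between_interval y).
rewrite shuffle_leP word_le_between //; split=> le_blocks i; first exact/shuffle_le_decompose.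
case: (ltnP i nblocks) => [lt_i|ge_i]; first exact/(shuffle_le_decompose _ _ (Ordinal lt_i)).
by rewrite !nth_default ?size_blocks_between.
Qed.
End Interval.

Theorem lemma2p2 (M N : nat) (u w : W M N) (huw : shuffle_le u w) :
  exists (k : nat) (Ms Ns : 'I_k -> nat), 0 < k /\
    exists f : {v : W M N | shuffle_le u v /\ shuffle_le v w} ->
               (forall p : 'I_k, W (Ms p) (Ns p)),
      bijective f /\
      (forall x y, shuffle_le (sval x) (sval y) <->
                   (forall p : 'I_k, shuffle_le (f x p) (f y p))).
Proof.
have uw := shuffle_le_word_le huw.
exists (nblocks u w), (fun i => size (low_block u w i)), (fun i => size (up_block u w i)).
split=> //; exists (decompose uw); split.
- by exists (compose uw); [apply: decomposeK | apply: composeK].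
- exact: shuffle_le_interval.
Qed.
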